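(* For every field $\mathbb{F}$, all $n,d\ge1$ and every tensor $A:[n]^{2d}\to\mathbb{F}$, we have $\mathcal L_{\mathsf{nc,sm}}(A^\flat)\ge n^{\log_2 d}\,\rho(A)$.
   Context: For $a,b\in\{0,1\}$ and $\alpha\in\{0,1\}^{d-1}$ define the partition $I_{a,\alpha,b}\sqcup J_{a,\alpha,b}=[2d]$ by $I_{a,\alpha,b}=[2d]\cap\{a,\,2+\alpha_1,\,4+\alpha_2,\dots,2d-2+\alpha_{d-1},\,2d+b\}$ and $J_{a,\alpha,b}=[2d]\cap\{1-a,\,3-\alpha_1,\,5-\alpha_2,\dots,2d-1-\alpha_{d-1},\,2d+1-b\}$. For $A:[n]^{2d}\to\mathbb{F}$ and a partition $I\sqcup J=[2d]$, $\mathrm{Mat}_{I,J}(A)$ is the $n^{|I|}\times n^{|J|}$ flattening (rows indexed by coordinates in $I$, columns by those in $J$). $\mathrm{relrk}_{a,\alpha,b}(A)=n^{-d}\mathrm{rank}(\mathrm{Mat}_{I_{a,\alpha,b},J_{a,\alpha,b}}(A))$, and \[\rho(A)=\max_{a,b\in\{0,1\}}\ \min_{\{X_\alpha\}}\ \sum_{\alpha\in\{0,1\}^{d-1}}\mathrm{relrk}_{a,\alpha,b}(X_\alpha),\] the minimum over families of tensors $X_\alpha:[n]^{2d}\to\mathbb{F}$ with $A=\sum_\alpha X_\alpha$. The flattening $A^\flat:[n^2]^d\to\mathbb{F}$ is $A^\flat(\langle a_1,b_1\rangle,\dots,\langle a_d,b_d\rangle)=A(a_1,b_1,\dots,a_d,b_d)$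 with $\langle a,b\rangle=(a-1)n+b$. Non-commutative set-multilinear formula size of $B:[N]^k\to\mathbb{F}$: if $k=1$, $\mathcal L_{\mathsf{nc,sm}}(B)=1$ if $B\ne0$ and $0$ otherwise; if $k\ge2$ it is the minimum of $\sum_i(\mathcal L_{\mathsf{nc,sm}}(B_i)+\mathcal L_{\mathsf{nc,sm}}(C_i))$ over finite families with positive $e_i+f_i=k$, $B_i:[N]^{e_i}\to\mathbb{F}$, $C_i:[N]^{f_i}\to\mathbb{F}$, $B=\sum_iB_i\otimes C_i$ (concatenating coordinates in order). *)

From HB Require Import structures.
From mathcomp Require Import all_boot all_order all_algebra.
From mathcomp Require Import boolp classical_sets reals exp.
From mathcomp Require Import Rstruct.
Set Implicit Arguments. Unset Strict Implicit. Unset Printing Implicit Defensive.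
Import Order.TTheory GRing.Theory Num.Theory.
Local Open Scope ring_scope.

(* Coordinates are 0-based: [N] = {1..N} is modelled by 'I_N = {0..N-1}.     *)
Definition tensor (F : fieldType) (N k : nat) :=
  {ffun {ffun 'I_k -> 'I_N} -> F}.

(* used only where the minimum is attained.                                   *)
Definition natmin (S : nat -> Prop) : nat :=
  xget 0%N [set m | S m /\ forall m', S m' -> (m <= m')%N].
Definition realmin (S : set Rdefinitions.R) : Rdefinitions.R :=
  xget 0 [set r | S r /\ forall r', S r' -> r <= r'].

(* position p : 'I_(2d) is the (1-based) coordinate p.+1;                     *)
(* alpha : {0,1}^{d-1}, alpha_{j+1} = alpha j for j : 'I_(d-1).               *)
Definition Iset (d : nat) (a : bool) (alpha : {ffun 'I_d.-1 -> bool}) (b : bool)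
  : {set 'I_(2 * d)} :=
  [set p : 'I_(2 * d) | [|| p.+1 == (a : nat),
                           [exists j : 'I_d.-1, p.+1 == (2 * j.+1 + alpha j)%N]
                         | p.+1 == (2 * d + b)%N]].

Definition Jset (d : nat) (a : bool) (alpha : {ffun 'I_d.-1 -> bool}) (b : bool)
  : {set 'I_(2 * d)} :=
  [set p : 'I_(2 * d) | [|| p.+1 == (1 - a)%N,
                           [exists j : 'I_d.-1, p.+1 == (3 + 2 * j - alpha j)%N]
                         | p.+1 == (2 * d + 1 - b)%N]].

(* Rows are indexed by the n^|I| assignments of the coordinates in I, columns *)
(* by the n^|J| assignments of the coordinates in J.  The entry (x, y) is     *)
(* A evaluated at the index z agreeing with x on I and with y on J (written   *)
(* as the sum over all such z, which is a single term since I |_| J = [m]).   *)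
Definition rowT (n m : nat) (I : {set 'I_m}) :=
  {ffun {p : 'I_m | p \in I} -> 'I_n}.

Definition Mat (F : fieldType) (n m : nat) (I J : {set 'I_m}) (A : tensor F n m)
  : 'M[F]_(#|{: rowT n I}|, #|{: rowT n J}|) :=
  \matrix_(i, j)
    \sum_(z : {ffun 'I_m -> 'I_n} |
          [forall q : {p : 'I_m | p \in I}, z (val q) == (enum_val i : rowT n I) q] &&
          [forall q : {p : 'I_m | p \in J}, z (val q) == (enum_val j : rowT n J) q]) A z.

Definition relrk (F : fieldType) (n d : nat) (a : bool)
  (alpha : {ffun 'I_d.-1 -> bool}) (b : bool) (A : tensor F n (2 * d))
  : Rdefinitions.R :=
  (\rank (Mat (Iset a alpha b) (Jset a alpha b) A))%:R / (n%:R ^+ d).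

Definition rho_ab (F : fieldType) (n d : nat) (a b : bool) (A : tensor F n (2 * d))
  : Rdefinitions.R :=
  realmin [set r | exists X : {ffun 'I_d.-1 -> bool} -> tensor F n (2 * d),
                     A = \sum_alpha X alpha /\
                     r = \sum_alpha relrk a alpha b (X alpha)].

Definition rho (F : fieldType) (n d : nat) (A : tensor F n (2 * d)) : Rdefinitions.R :=
  Num.max (Num.max (rho_ab false false A) (rho_ab false true A))
          (Num.max (rho_ab true false A) (rho_ab true true A)).

(* 0-based pairing <a,b> = a * n + b (the 1-based (a-1)n+b); we invert it.    *)
Lemma ord_sq_pos (n : nat) (y : 'I_(n * n)) : (0 < n)%N.
Proof. case: n y => [|n] [y Hy] //. Qed.

Lemma ord_mod_lt (n : nat) (y : 'I_(n * n)) : (y %% n < n)%N.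
Proof. by rewrite ltn_mod (ord_sq_pos y). Qed.

Lemma ord_div_lt (n : nat) (y : 'I_(n * n)) : (y %/ n < n)%N.
Proof. by rewrite ltn_divLR ?(ord_sq_pos y). Qed.

Lemma half_lt (d : nat) (p : 'I_(2 * d)) : (p./2 < d)%N.
Proof. case: p => p Hp /=; rewrite -divn2 ltn_divLR // mulnC //. Qed.

Definition pair_fst (n : nat) (y : 'I_(n * n)) : 'I_n := Ordinal (ord_div_lt y).
Definition pair_snd (n : nat) (y : 'I_(n * n)) : 'I_n := Ordinal (ord_mod_lt y).
Definition half_ord (d : nat) (p : 'I_(2 * d)) : 'I_d := Ordinal (half_lt p).

Definition flat (F : fieldType) (n d : nat) (A : tensor F n (2 * d))
  : tensor F (n * n) d :=
  [ffun y : {ffun 'I_d -> 'I_(n * n)} =>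
     A [ffun p : 'I_(2 * d) =>
          if odd p then pair_snd (y (half_ord p)) else pair_fst (y (half_ord p))]].

Definition tprod (F : fieldType) (N e f k : nat) (H : (e + f)%N = k)
  (B : tensor F N e) (C : tensor F N f) : tensor F N k :=
  [ffun x : {ffun 'I_k -> 'I_N} =>
     B [ffun i : 'I_e => x (cast_ord H (lshift f i))] *
     C [ffun j : 'I_f => x (cast_ord H (rshift e j))]].

(* sm_size B s : s is the value sum_i (s_i + t_i) of some admissible         *)
(* decomposition (recursively), i.e. s is one of the quantities over which    *)
(* the recursive minimum defining L_{nc,sm}(B) is taken;                      *)
Inductive sm_size (F : fieldType) (N : nat) : forall k, tensor F N k -> nat -> Prop :=
| sm_one : forall B : tensor F N 1, sm_size B (B != 0)
| sm_many : forall k (B : tensor F N k) s, (2 <= k)%N -> sm_fam B s -> sm_size B s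
with sm_fam (F : fieldType) (N : nat) : forall k, tensor F N k -> nat -> Prop :=
| fam_nil : forall k, sm_fam (0 : tensor F N k) 0
| fam_cons : forall k e f (H : (e + f)%N = k) (B : tensor F N e) (C : tensor F N f)
               sB sC (T : tensor F N k) s,
    (0 < e)%N -> (0 < f)%N -> sm_size B sB -> sm_size C sC -> sm_fam T s ->
    sm_fam (T + tprod H B C) (sB + sC + s).

Definition Lncsm (F : fieldType) (N k : nat) (B : tensor F N k) : nat :=
  natmin (sm_size B).

(* For fixed end bits a, b, the relative rank is subadditive, and for a product X (x) Y
   split at a pair boundary carrying the bit c it is submultiplicative:
   relrk_{a,(be,c,ga),b}(X (x) Y) <= relrk_{a,be,c}(X) * relrk_{c,ga,b}(Y).
   Hence rho_{a,b} is subadditive and rho_{a,b}(X (x) Y) <= rho_{a,c}(X) * rho_{c,b}(Y)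
   for every c.  Always rho_{a,b} <= 1, and rho_{a,b} <= 1/n when a <> b, since one
   side of the flattening then has only d - 1 coordinates.  By induction on a formula
   of size s computing A^flat, A : [n]^(2k), rho_{a,b}(A) <= s / n^(log_2 k): at a
   product gate of degrees e + f = k, choose c so that the smaller factor gets unequal
   end bits and contributes 1/n; the larger factor has degree at least k/2, and
   n^(log_2 k) <= n * n^(log_2 e). *)

From HB Require Import structures.
From mathcomp Require Import all_boot all_order all_algebra.
From mathcomp Require Import boolp classical_sets reals exp.
From mathcomp Require Import Rstruct.
From mathcomp Require Import zify.
Set Implicit Arguments. Unset Strict Implicit. Unset Printing Implicit Defensive.
Import Order.TTheory GRing.Theory Num.Theory.
Local Open Scope ring_scope.

Definition bit m (al : {ffun 'I_m -> bool}) (i : nat) : bool := nth false (fgraph al) i.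

Lemma bitE m (al : {ffun 'I_m -> bool}) (j : 'I_m) : bit al j = al j.
Proof. exact: nth_fgraph_ord. Qed.

Lemma bit_ord m (al : {ffun 'I_m -> bool}) i (lt_im : (i < m)%N) :
  bit al i = al (Ordinal lt_im).
Proof. exact: (bitE al (Ordinal lt_im)). Qed.

(* [ext_bits a al b t], for [t = 0, ..., d], is the sequence [a, al_1, ..., al_(d-1), b]:
   coordinate [2t + ext_bits a al b t] (1-based) lies in [Iset a al b]. *)
Definition ext_bits d (a : bool) (al : {ffun 'I_d.-1 -> bool}) (b : bool) (t : nat) :=
  if t == 0%N then a else if t == d then b else bit al t.-1.

Section ExtBits.
Variables (d : nat) (a b : bool) (al : {ffun 'I_d.-1 -> bool}).

Lemma ext_bits_last : (0 < d)%N -> ext_bits a al b d = b.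
Proof. by rewrite /ext_bits eqxx => /gtn_eqF->. Qed.

Lemma ext_bitsS (j : 'I_d.-1) : ext_bits a al b j.+1 = al j.
Proof. by rewrite /ext_bits /= ifN ?bitE //; have := ltn_ord j; lia. Qed.

End ExtBits.

Lemma eqn_double_add t s (o c : bool) :
  (2 * t + o == 2 * s + c)%N = (t == s) && (o == c).
Proof.
apply/eqP/andP => [|[/eqP-> /eqP->]] //.
by case: o c => [] [] /= e; split => //; lia.
Qed.

(* The sets [Iset] and [Jset] list one coordinate per [t = 0, ..., d]; a coordinate
   [2t + o] can only be the one listed for [t]. *)
Lemma boundary_memE (g : nat -> bool) d t (o : bool) : (0 < 2 * t + o <= 2 * d)%N ->
  [|| 2 * t + o == g 0%N, [exists j : 'I_d.-1, 2 * t + o == 2 * j.+1 + g j.+1]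
    | 2 * t + o == 2 * d + g d]%N = (g t == o).
Proof.
move=> t_range; have d_gt0 : (0 < d)%N by lia.
rewrite -[nat_of_bool (g 0%N)]/(2 * 0 + g 0%N)%N !eqn_double_add.
under eq_existsb => j do rewrite eqn_double_add.
have [->|t_gt0] := posnP t.
  rewrite /= (ltn_eqF d_gt0) orbF -[RHS]orbF eq_sym; congr (_ || _).
  by apply/existsP => -[].
have [t_lt|t_ge] := ltnP t d.
  rewrite /= (ltn_eqF t_lt) orbF eq_sym.
  apply/existsP/idP => [[j /andP[/eqP-> /eqP->]] //|gt_o].
  have j_lt : (t.-1 < d.-1)%N by lia.
  by exists (Ordinal j_lt); rewrite /= prednK ?eqxx // eq_sym.
have -> : t = d by lia.
suff -> : [exists j : 'I_d.-1, (d == j.+1) && (o == g j.+1)] = false.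
  by rewrite /= eqxx eq_sym.
by apply/existsP => -[j /andP[/eqP j_eq _]]; have := ltn_ord j; lia.
Qed.

Lemma succ_double_uphalf (p : nat) : p.+1 = (2 * uphalf p + ~~ odd p)%N.
Proof. by rewrite uphalfE -{1}(odd_double_half p.+1) /= -muln2 addnC mulnC. Qed.

Lemma IsetE d a al b (p : 'I_(2 * d)) :
  (p \in Iset a al b) = (ext_bits a al b (uphalf p) == ~~ odd p).
Proof.
have d_gt0 : (0 < d)%N by have := ltn_ord p; lia.
rewrite inE succ_double_uphalf -(@boundary_memE (ext_bits a al b) d); last first.
  by rewrite -succ_double_uphalf; have := ltn_ord p; lia.
rewrite ext_bits_last //; congr [|| _, _ | _].
by apply: eq_existsb => j; rewrite ext_bitsS.
Qed.

Lemma JsetC d a al b : Jset (d := d) a al b = ~: Iset a al b.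
Proof.
apply/setP => p; have d_gt0 : (0 < d)%N by have := ltn_ord p; lia.
rewrite finset.in_setC IsetE inE succ_double_uphalf.
have -> : ~~ (ext_bits a al b (uphalf p) == ~~ odd p)
         = (~~ ext_bits a al b (uphalf p) == ~~ odd p) by case: ext_bits; case: odd.
rewrite -(@boundary_memE (fun t => ~~ ext_bits a al b t) d); last first.
  by rewrite -succ_double_uphalf; have := ltn_ord p; lia.
rewrite ext_bits_last //; congr [|| _, _ | _]; first by case: a.
  by apply: eq_existsb => j; rewrite ext_bitsS; case: (al j); lia.
by case: b; lia.
Qed.

Lemma sum_ext_pairs (E : nat -> bool) m : (0 < m)%N ->
  (\sum_(0 <= q < 2 * m) (E (uphalf q) == ~~ odd q : nat) = E 0%N + m.-1 + ~~ E m)%N.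
Proof.
elim: m => // m IH _.
rewrite (_ : 2 * m.+1 = (2 * m).+2)%N ?big_nat_recr //=; last by lia.
have -> : uphalf (2 * m) = m by rewrite uphalfE -divn2; lia.
have -> : (2 * m)./2 = m by rewrite -divn2; lia.
rewrite oddM /=.
case: m IH => [|m] IH; first by rewrite big_nil /=; case: (E 0%N); case: (E 1%N).
by rewrite IH //=; case: (E m.+1); case: (E m.+2); case: (E 0%N) => /=; lia.
Qed.

Lemma card_Iset d a al b : (0 < d)%N -> #|Iset (d := d) a al b| = (a + d.-1 + ~~ b)%N.
Proof.
move=> d_gt0; rewrite -sum1_card big_mkcond /=.
rewrite (eq_bigr (fun p : 'I_(2 * d) => (ext_bits a al b (uphalf p) == ~~ odd p : nat)));
  last by move=> p _; rewrite IsetE.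
rewrite -(big_mkord xpredT (fun q => (ext_bits a al b (uphalf q) == ~~ odd q : nat))).
by rewrite sum_ext_pairs // ext_bits_last.
Qed.

Lemma minn_card_Iset d a al b : (0 < d)%N ->
  minn #|Iset (d := d) a al b| #|~: Iset a al b| = (d - (a != b))%N.
Proof.
move=> d_gt0; have := cardsC (Iset a al b).
by rewrite card_ord card_Iset //; case: a b => [] [] /=; lia.
Qed.

Section CatBits.
Variables (e f k : nat).
Hypotheses (efk : (e + f)%N = k) (e_gt0 : (0 < e)%N) (f_gt0 : (0 < f)%N).

Definition cat_bits (be : {ffun 'I_e.-1 -> bool}) (c : bool) (ga : {ffun 'I_f.-1 -> bool})
  : {ffun 'I_k.-1 -> bool} :=
  [ffun j : 'I_k.-1 => if (j < e.-1)%N then bit be j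
                       else if j == e.-1 :> nat then c else bit ga (j - e)].

Definition lbits (al : {ffun 'I_k.-1 -> bool}) : {ffun 'I_e.-1 -> bool} :=
  [ffun j : 'I_e.-1 => bit al j].

Definition rbits (al : {ffun 'I_k.-1 -> bool}) : {ffun 'I_f.-1 -> bool} :=
  [ffun j : 'I_f.-1 => bit al (j + e)].

Section FixedParts.
Variables (be : {ffun 'I_e.-1 -> bool}) (c : bool) (ga : {ffun 'I_f.-1 -> bool}).

Lemma bit_cat i : (i < k.-1)%N ->
  bit (cat_bits be c ga) i =
    if (i < e.-1)%N then bit be i else if i == e.-1 then c else bit ga (i - e).
Proof. by move=> i_lt; rewrite (bit_ord _ i_lt) ffunE. Qed.

Lemma ext_bits_catl a b t : (t <= e)%N ->
  ext_bits a (cat_bits be c ga) b t = ext_bits a be c t.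
Proof.
move=> t_le; rewrite /ext_bits; have [//|t_gt0] := posnP t.
rewrite (_ : t == k = false) ?bit_cat; try lia.
have [->|t_ne] := eqVneq t e; first by rewrite ltnn eqxx.
by rewrite ifT //; lia.
Qed.

Lemma ext_bits_catr a b t : (t <= f)%N ->
  ext_bits a (cat_bits be c ga) b (e + t) = ext_bits c ga b t.
Proof.
move=> t_le; rewrite /ext_bits (gtn_eqF (leq_trans e_gt0 (leq_addr _ _))).
have [->|t_gt0] := posnP t.
  by rewrite addn0 (_ : e == k = false) ?bit_cat ?ltnn ?eqxx //; lia.
have [->|t_ne] := eqVneq t f; first by rewrite efk eqxx.
rewrite (_ : e + t == k = false) ?bit_cat ?ifF; try lia.
by congr (bit ga _); lia.
Qed.

Lemma lbits_cat : lbits (cat_bits be c ga) = be.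
Proof.
apply/ffunP => j; rewrite ffunE bit_cat ?ltn_ord ?bitE //.
by have := ltn_ord j; lia.
Qed.

Lemma rbits_cat : rbits (cat_bits be c ga) = ga.
Proof.
apply/ffunP => j; have := ltn_ord j => j_lt.
by rewrite ffunE bit_cat ?ifF ?addnK ?bitE //; lia.
Qed.

Lemma cat_lrbits (al : {ffun 'I_k.-1 -> bool}) :
  bit al e.-1 = c -> cat_bits (lbits al) c (rbits al) = al.
Proof.
move=> al_c; apply/ffunP => j; rewrite ffunE.
case: ifP => [j_lt|j_ge]; first by rewrite (bit_ord _ j_lt) ffunE bitE.
case: ifP => [/eqP j_eq|j_ne]; first by rewrite -al_c -j_eq bitE.
have j_lt : (j - e < f.-1)%N by have := ltn_ord j; lia.
by rewrite (bit_ord _ j_lt) ffunE subnK ?bitE //; lia.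
Qed.

End FixedParts.

Lemma sum_cat_bits (V : nmodType) c
    (G : {ffun 'I_e.-1 -> bool} -> {ffun 'I_f.-1 -> bool} -> V) :
  \sum_(al : {ffun 'I_k.-1 -> bool} | bit al e.-1 == c) G (lbits al) (rbits al)
  = \sum_be \sum_ga G be ga.
Proof.
rewrite pair_bigA /=.
rewrite (reindex_onto (fun p => cat_bits p.1 c p.2) (fun al => (lbits al, rbits al))).
  apply: eq_big => [[be ga]|[be ga] _]; rewrite /= lbits_cat rbits_cat //.
  by rewrite bit_cat ?ltnn ?eqxx //; lia.
by move=> al /eqP al_c; rewrite cat_lrbits.
Qed.

Section Coordinates.
Variables (efk2 : (2 * e + 2 * f)%N = (2 * k)%N) (a b c : bool).
Variables (be : {ffun 'I_e.-1 -> bool}) (ga : {ffun 'I_f.-1 -> bool}).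

Lemma in_Iset_lshift (p : 'I_(2 * e)) :
  (cast_ord efk2 (lshift (2 * f) p) \in Iset a (cat_bits be c ga) b) = (p \in Iset a be c).
Proof.
rewrite !IsetE /= ext_bits_catl // uphalfE -divn2.
by have := ltn_ord p; lia.
Qed.

Lemma in_Iset_rshift (p : 'I_(2 * f)) :
  (cast_ord efk2 (rshift (2 * e) p) \in Iset a (cat_bits be c ga) b) = (p \in Iset c ga b).
Proof.
rewrite !IsetE /= oddD oddM addFb.
rewrite (_ : uphalf (2 * e + p) = e + uphalf p)%N ?ext_bits_catr //.
  by rewrite uphalfE -divn2; have := ltn_ord p; lia.
by rewrite !uphalfE -!divn2; lia.
Qed.

End Coordinates.
End CatBits.

Section RankBounds.
Variable F : fieldType.

Lemma mxrank_sum_mul_le m p (T : finType) (g : 'I_m -> T -> F) (h : T -> 'I_p -> F) :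
  (\rank (\matrix_(i, j) (\sum_(t : T) g i t * h t j)%R) <= #|T|)%N.
Proof.
set P := \matrix_(i < m, t < #|T|) g i (enum_val t).
set Q := \matrix_(t < #|T|, j < p) h (enum_val t) j.
have -> : \matrix_(i, j) (\sum_(t : T) g i t * h t j)%R = P *m Q.
  apply/matrixP => i j; rewrite !mxE (reindex _ (onW_bij _ (enum_val_bij T))).
  by apply: eq_bigr => t _; rewrite !mxE.
exact: leq_trans (mxrankM_maxl P Q) (rank_leq_col P).
Qed.

Lemma mxrank_reindex_mul_le m p m1 p1 m2 p2 (P : 'M[F]_(m1, p1)) (Q : 'M[F]_(m2, p2))
    (r1 : 'I_m -> 'I_m1) (c1 : 'I_p -> 'I_p1) (r2 : 'I_m -> 'I_m2) (c2 : 'I_p -> 'I_p2) :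
  (\rank (\matrix_(i, j) (P (r1 i) (c1 j) * Q (r2 i) (c2 j))%R) <= \rank P * \rank Q)%N.
Proof.
rewrite -(card_ord (\rank P)) -(card_ord (\rank Q)) -card_prod.
set g := fun i (t : 'I_(\rank P) * 'I_(\rank Q)) =>
  col_base P (r1 i) t.1 * col_base Q (r2 i) t.2.
set h := fun (t : 'I_(\rank P) * 'I_(\rank Q)) j =>
  row_base P t.1 (c1 j) * row_base Q t.2 (c2 j).
suff -> : \matrix_(i, j) (P (r1 i) (c1 j) * Q (r2 i) (c2 j))%R
        = \matrix_(i, j) (\sum_t g i t * h t j)%R by apply: mxrank_sum_mul_le.
apply/matrixP => i j; rewrite !mxE -{1}(mulmx_base P) -{1}(mulmx_base Q) !mxE.
rewrite big_distrlr pair_bigA /=; apply: eq_bigr => -[u v] _.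
by rewrite /g /h mulrACA.
Qed.

End RankBounds.

Lemma MatD (F : fieldType) n m (I J : {set 'I_m}) (A B : tensor F n m) :
  Mat I J (A + B) = Mat I J A + Mat I J B.
Proof.
apply/matrixP => i j; rewrite !mxE -big_split /=.
by apply: eq_bigr => z _; rewrite ffunE.
Qed.

Lemma Mat0 (F : fieldType) n m (I J : {set 'I_m}) : Mat I J (0 : tensor F n m) = 0.
Proof. by apply/matrixP => i j; rewrite !mxE big1 // => z _; rewrite ffunE. Qed.

Section Flattenings.
Variables (F : fieldType) (n' : nat).
Local Notation n := n'.+1.

(* [ord0] is a junk value: [ext_assign x] is only ever read on [I]. *)
Definition ext_assign m (I : {set 'I_m}) (x : rowT n I) : {ffun 'I_m -> 'I_n} :=
  [ffun p => if (insub p : option {p : 'I_m | p \in I}) is Some q then x q else ord0].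

Lemma ext_assignE m (I : {set 'I_m}) (x : rowT n I) p (p_in : p \in I) :
  ext_assign x p = x (exist _ p p_in).
Proof. by rewrite ffunE insubT. Qed.

Definition merge_assign m (I J : {set 'I_m}) (x : rowT n I) (y : rowT n J) :=
  [ffun p => if p \in I then ext_assign x p else ext_assign y p].

Lemma merge_assignE m (I J : {set 'I_m}) (x : rowT n I) (y : rowT n J) p :
  merge_assign x y p = if p \in I then ext_assign x p else ext_assign y p.
Proof. exact: ffunE. Qed.

Lemma Mat_complE m (I : {set 'I_m}) (A : tensor F n m) i j :
  Mat I (~: I) A i j = A (merge_assign (enum_val i) (enum_val j)).
Proof.
rewrite mxE; apply: big_pred1 => z /=.
apply/andP/eqP => [[/forallP zx /forallP zy]|->].
  apply/ffunP => p; rewrite merge_assignE; case: ifP => p_in.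
    by rewrite (ext_assignE _ p_in); apply/eqP/(zx (exist _ p p_in)).
  have p_out : p \in ~: I by rewrite finset.in_setC p_in.
  by rewrite (ext_assignE _ p_out); apply/eqP/(zy (exist _ p p_out)).
split; apply/forallP => -[p p_in]; rewrite merge_assignE /= (ext_assignE _ p_in).
  by rewrite p_in.
by rewrite ifN // -finset.in_setC.
Qed.

Section Restrict.
Variables (m1 m : nat) (sigma : 'I_m1 -> 'I_m) (I1 : {set 'I_m1}) (I : {set 'I_m}).
Hypothesis sigmaI : forall p, (sigma p \in I) = (p \in I1).

Definition restrict (J1 : {set 'I_m1}) (J : {set 'I_m}) (x : rowT n J) : rowT n J1 :=
  [ffun q => ext_assign x (sigma (val q))].

Lemma merge_assign_restrict (x : rowT n I) (y : rowT n (~: I)) :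
  [ffun p => merge_assign x y (sigma p)]
  = merge_assign (restrict I1 x) (restrict (~: I1) y).
Proof.
apply/ffunP => p; rewrite ffunE !merge_assignE sigmaI; case: ifP => p_in.
  by rewrite (ext_assignE _ p_in) [restrict _ _ _]ffunE.
have p_out : p \in ~: I1 by rewrite finset.in_setC p_in.
by rewrite (ext_assignE _ p_out) [restrict _ _ _]ffunE.
Qed.

End Restrict.

Section TensorProduct.
Variables (e f k : nat).
Hypotheses (efk : (e + f)%N = k) (e_gt0 : (0 < e)%N) (f_gt0 : (0 < f)%N).
Variables (efk2 : (2 * e + 2 * f)%N = (2 * k)%N) (a b c : bool).
Variables (be : {ffun 'I_e.-1 -> bool}) (ga : {ffun 'I_f.-1 -> bool}).
Variables (X : tensor F n (2 * e)) (Y : tensor F n (2 * f)).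

Let I := Iset a (cat_bits k be c ga) b.
Let IB := Iset a be c.
Let IC := Iset c ga b.
Let lsigma (p : 'I_(2 * e)) := cast_ord efk2 (lshift (2 * f) p).
Let rsigma (p : 'I_(2 * f)) := cast_ord efk2 (rshift (2 * e) p).

Lemma Mat_tprodE i j :
  Mat I (~: I) (tprod efk2 X Y) i j =
    Mat IB (~: IB) X (enum_rank (restrict lsigma IB (enum_val i)))
                     (enum_rank (restrict lsigma (~: IB) (enum_val j))) *
    Mat IC (~: IC) Y (enum_rank (restrict rsigma IC (enum_val i)))
                     (enum_rank (restrict rsigma (~: IC) (enum_val j))).
Proof.
rewrite !Mat_complE !enum_rankK ffunE.
rewrite -(merge_assign_restrict (in_Iset_lshift efk e_gt0 f_gt0 efk2 a b c be ga)).
by rewrite -(merge_assign_restrict (in_Iset_rshift efk e_gt0 f_gt0 efk2 a b c be ga)).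
Qed.

Lemma mxrank_Mat_tprod :
  (\rank (Mat I (~: I) (tprod efk2 X Y))
     <= \rank (Mat IB (~: IB) X) * \rank (Mat IC (~: IC) Y))%N.
Proof.
set M := Mat I _ _.
have -> : M = \matrix_(i, j) (M i j) by apply/matrixP => i j; rewrite mxE.
under eq_mx => i j do rewrite /M Mat_tprodE.
exact: mxrank_reindex_mul_le.
Qed.

End TensorProduct.

Lemma pair_ord_lt (u v : 'I_n) : (u * n + v < n * n)%N.
Proof. by have := ltn_ord u; have := ltn_ord v; nia. Qed.

Definition pair_ord (u v : 'I_n) : 'I_(n * n) := Ordinal (pair_ord_lt u v).

Lemma coord_fst_lt k (i : 'I_k) : (2 * i < 2 * k)%N.
Proof. by have := ltn_ord i; lia. Qed.

Lemma coord_snd_lt k (i : 'I_k) : (2 * i + 1 < 2 * k)%N.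
Proof. by have := ltn_ord i; lia. Qed.

Definition coord_fst k (i : 'I_k) : 'I_(2 * k) := Ordinal (coord_fst_lt i).
Definition coord_snd k (i : 'I_k) : 'I_(2 * k) := Ordinal (coord_snd_lt i).

Definition unflat k (B : tensor F (n * n) k) : tensor F n (2 * k) :=
  [ffun z : {ffun 'I_(2 * k) -> 'I_n} =>
     B [ffun i => pair_ord (z (coord_fst i)) (z (coord_snd i))]].

Lemma unflat_flat d (A : tensor F n (2 * d)) : unflat (flat A) = A.
Proof.
apply/ffunP => z; rewrite !ffunE; congr (A _); apply/ffunP => p; rewrite !ffunE.
have p_eq := odd_double_half p; rewrite -muln2 in p_eq.
case: ifP => p_odd; apply/val_inj => /=; rewrite p_odd /= in p_eq.
  by rewrite modnMDl modn_small //; congr (val (z _)); apply/val_inj => /=; lia.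
by rewrite divnMDl // divn_small // addn0; congr (val (z _)); apply/val_inj => /=; lia.
Qed.

Lemma unflatD k (B C : tensor F (n * n) k) : unflat (B + C) = unflat B + unflat C.
Proof. by apply/ffunP => z; rewrite !ffunE. Qed.

Lemma unflat0 k : unflat (0 : tensor F (n * n) k) = 0.
Proof. by apply/ffunP => z; rewrite !ffunE. Qed.

Lemma unflat_tprod e f k (efk : (e + f)%N = k) (efk2 : (2 * e + 2 * f)%N = (2 * k)%N)
    (B : tensor F (n * n) e) (C : tensor F (n * n) f) :
  unflat (tprod efk B C) = tprod efk2 (unflat B) (unflat C).
Proof.
apply/ffunP => z; rewrite !ffunE; congr (B _ * C _); apply/ffunP => i; rewrite !ffunE;
  by congr pair_ord; congr (z _); apply/val_inj => /=; lia.
Qed.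

End Flattenings.

Lemma tprod_sum (F : fieldType) (I1 I2 : finType) N e f k (efk : (e + f)%N = k)
    (X : I1 -> tensor F N e) (Y : I2 -> tensor F N f) :
  tprod efk (\sum_i X i) (\sum_j Y j) = \sum_i \sum_j tprod efk (X i) (Y j).
Proof.
apply/ffunP => z; rewrite !ffunE !sum_ffunE big_distrlr /=.
by apply: eq_bigr => i _; rewrite sum_ffunE; apply: eq_bigr => j _; rewrite ffunE.
Qed.

Local Notation R := Rdefinitions.R.

Section RelativeRank.
Variables (F : fieldType) (n' : nat).
Local Notation n := n'.+1.

Lemma relrk_complE d a al b (A : tensor F n (2 * d)) :
  relrk a al b A = (\rank (Mat (Iset a al b) (~: Iset a al b) A))%:R / n%:R ^+ d.
Proof. by rewrite /relrk JsetC. Qed.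

Lemma expn_gt0R d : (0 : R) < n%:R ^+ d.
Proof. by rewrite exprn_gt0 ?ltr0n. Qed.

Lemma relrk_ge0 d a al b (A : tensor F n (2 * d)) : 0 <= relrk a al b A.
Proof. by rewrite /relrk divr_ge0 // ltW // expn_gt0R. Qed.

Lemma mxrank_Mat_Iset_le d a al b (A : tensor F n (2 * d)) : (0 < d)%N ->
  (\rank (Mat (Iset a al b) (~: Iset a al b) A) <= n ^ (d - (a != b)))%N.
Proof.
move=> d_gt0; rewrite -(minn_card_Iset a al b d_gt0) /minn.
have card_rowT m (I : {set 'I_m}) : #|{: rowT n I}| = (n ^ #|I|)%N.
  by rewrite card_ffun card_ord card_sig.
case: ifP => _; rewrite -card_rowT; [exact: rank_leq_row | exact: rank_leq_col].
Qed.

Lemma relrk_le1 d a al b (A : tensor F n (2 * d)) : (0 < d)%N -> relrk a al b A <= 1.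
Proof.
move=> d_gt0; rewrite relrk_complE ler_pdivrMr ?expn_gt0R // mul1r -natrX ler_nat.
by apply: leq_trans (mxrank_Mat_Iset_le _ _ _ _ d_gt0) _; rewrite leq_pexp2l ?leq_subr.
Qed.

Lemma relrk_le_invn d a al b (A : tensor F n (2 * d)) : (0 < d)%N -> a != b ->
  relrk a al b A <= n%:R^-1.
Proof.
move=> d_gt0 a_ne_b; have := mxrank_Mat_Iset_le a al b A d_gt0.
have expS : n%:R ^+ d = n%:R * n%:R ^+ d.-1 :> R by rewrite -exprS prednK.
rewrite relrk_complE a_ne_b subn1 ler_pdivrMr ?expn_gt0R // expS.
by rewrite mulrA mulVf ?mul1r ?pnatr_eq0 //= -natrX ler_nat.
Qed.

Lemma relrkD d a al b (A B : tensor F n (2 * d)) :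
  relrk a al b (A + B) <= relrk a al b A + relrk a al b B.
Proof.
rewrite /relrk MatD -mulrDl ler_wpM2r ?invr_ge0 ?(ltW (expn_gt0R _)) //.
by rewrite -natrD ler_nat mxrank_add.
Qed.

Lemma relrk0 d a al b : relrk a al b (0 : tensor F n (2 * d)) = 0.
Proof. by rewrite /relrk Mat0 mxrank0 mul0r. Qed.

Lemma relrk_tprod e f k (efk : (e + f)%N = k) (e_gt0 : (0 < e)%N) (f_gt0 : (0 < f)%N)
    (efk2 : (2 * e + 2 * f)%N = (2 * k)%N) a b c
    (be : {ffun 'I_e.-1 -> bool}) (ga : {ffun 'I_f.-1 -> bool})
    (X : tensor F n (2 * e)) (Y : tensor F n (2 * f)) :
  relrk a (cat_bits k be c ga) b (tprod efk2 X Y) <= relrk a be c X * relrk c ga b Y.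
Proof.
rewrite !relrk_complE mulf_div -exprD efk ler_wpM2r ?invr_ge0 ?(ltW (expn_gt0R _)) //.
by rewrite -natrM ler_nat mxrank_Mat_tprod.
Qed.

End RelativeRank.

Section DecompositionCost.
Variables (F : fieldType) (n' : nat).
Local Notation n := n'.+1.

(* [rho_ab] is a [realmin], a junk value unless the minimum is attained, so upper
   bounds are first proved for explicit decompositions. *)
Definition decomp_le k a b (A : tensor F n (2 * k)) (r : R) :=
  exists X : {ffun 'I_k.-1 -> bool} -> tensor F n (2 * k),
    A = \sum_al X al /\ \sum_al relrk a al b (X al) <= r.

Lemma decomp_le_trans k a b (A : tensor F n (2 * k)) r r' :
  r <= r' -> decomp_le a b A r -> decomp_le a b A r'.
Proof. by move=> le_rr' [X [AX costX]]; exists X; split => //; apply: le_trans le_rr'. Qed.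

Lemma decomp_le0 k a b : decomp_le a b (0 : tensor F n (2 * k)) 0.
Proof.
exists (fun _ => 0); split; first by rewrite big1.
by rewrite big1 // => al _; rewrite relrk0.
Qed.

Lemma decomp_leD k a b (A A' : tensor F n (2 * k)) r r' :
  decomp_le a b A r -> decomp_le a b A' r' -> decomp_le a b (A + A') (r + r').
Proof.
move=> [X [AX costX]] [Y [AY costY]]; exists (fun al => X al + Y al); split.
  by rewrite AX AY big_split.
apply: le_trans (lerD costX costY); rewrite -big_split /=.
by apply: ler_sum => al _; apply: relrkD.
Qed.

Lemma decomp_le_relrk k a b (A : tensor F n (2 * k)) al0 :
  decomp_le a b A (relrk a al0 b A).
Proof.
exists (fun al => if al == al0 then A else 0); split.
  by rewrite (bigD1 al0) //= eqxx big1 ?addr0 // => al /negbTE->.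
by rewrite (bigD1 al0) //= eqxx big1 ?addr0 // => al /negbTE->; rewrite relrk0.
Qed.

Lemma decomp_le1 k a b (A : tensor F n (2 * k)) : (0 < k)%N -> decomp_le a b A 1.
Proof.
move=> k_gt0; apply: decomp_le_trans (decomp_le_relrk a b A [ffun => false]).
exact: relrk_le1.
Qed.

Lemma decomp_le_invn k a b (A : tensor F n (2 * k)) : (0 < k)%N -> a != b ->
  decomp_le a b A n%:R^-1.
Proof.
move=> k_gt0 a_ne_b; apply: decomp_le_trans (decomp_le_relrk a b A [ffun => false]).
exact: relrk_le_invn.
Qed.

(* The decompositions of the two factors are glued along the bit [c] of the middle pair. *)
Lemma decomp_le_tprod e f k (efk : (e + f)%N = k) (e_gt0 : (0 < e)%N) (f_gt0 : (0 < f)%N)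
    (efk2 : (2 * e + 2 * f)%N = (2 * k)%N) a c b
    (A1 : tensor F n (2 * e)) (A2 : tensor F n (2 * f)) r1 r2 :
  decomp_le a c A1 r1 -> decomp_le c b A2 r2 -> decomp_le a b (tprod efk2 A1 A2) (r1 * r2).
Proof.
move=> [X [A1X costX]] [Y [A2Y costY]].
exists (fun al => if bit al e.-1 == c
                  then tprod efk2 (X (lbits e al)) (Y (rbits e f al)) else 0).
split.
  rewrite A1X A2Y tprod_sum -big_mkcond /=.
  by rewrite (sum_cat_bits efk e_gt0 f_gt0 c (fun be ga => tprod efk2 (X be) (Y ga))).
have sum_relrk_ge0 d a' b' (Z : _ -> tensor F n (2 * d)) :
    0 <= \sum_al relrk a' al b' (Z al).
  by apply: sumr_ge0 => al _; apply: relrk_ge0.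
apply: le_trans (ler_pM (sum_relrk_ge0 _ _ _ _) (sum_relrk_ge0 _ _ _ _) costX costY).
rewrite big_distrlr /= -(sum_cat_bits efk e_gt0 f_gt0 c
  (fun be ga => relrk a be c (X be) * relrk c ga b (Y ga))).
rewrite [X in _ <= X]big_mkcond /=; apply: ler_sum => al _.
case: eqP => [al_c|_]; last by rewrite relrk0.
have := relrk_tprod efk e_gt0 f_gt0 efk2 a b c (lbits e al) (rbits e f al)
  (X (lbits e al)) (Y (rbits e f al)).
by rewrite (cat_lrbits efk e_gt0 f_gt0 al_c).
Qed.

End DecompositionCost.

Lemma realmin_le (S : set R) (D : R) : 0 < D ->
  (forall r, S r -> exists m : nat, r = m%:R / D) -> forall r, S r -> realmin S <= r.
Proof.
move=> D_gt0 S_nat r Sr.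
have ex_m : exists m, `[< S (m%:R / D) >].
  by have [m r_eq] := S_nat r Sr; exists m; apply/asboolP; rewrite -r_eq.
case: (ex_minnP ex_m) => m0 /asboolP Sm0 m0_min.
have min_ex : exists r0, [set r | S r /\ forall r', S r' -> r <= r']%classic r0.
  exists (m0%:R / D); split => // r' Sr'.
  have [m' r'_eq] := S_nat r' Sr'; rewrite r'_eq ler_wpM2r ?invr_ge0 ?(ltW D_gt0) //.
  by rewrite ler_nat m0_min //; apply/asboolP; rewrite -r'_eq.
by have [_] := xgetPex 0 min_ex; apply.
Qed.

Lemma rho_ab_le (F : fieldType) n' k a b (A : tensor F n'.+1 (2 * k)) r :
  decomp_le a b A r -> rho_ab a b A <= r.
Proof.
move=> [X [AX costX]]; apply: le_trans costX.
apply: (@realmin_le _ (n'.+1%:R ^+ k)); [exact: expn_gt0R | | by exists X].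
move=> _ [Y [_ ->]]; exists (\sum_al \rank (Mat (Iset a al b) (Jset a al b) (Y al)))%N.
by rewrite natr_sum mulr_suml.
Qed.

Section Expansion.
Variables (F : fieldType) (N : nat).

Definition unit_tensor (j : 'I_N) : tensor F N 1 :=
  [ffun x : {ffun 'I_1 -> 'I_N} => (x ord0 == j)%:R].

Definition slice k (j : 'I_N) (B : tensor F N k.+1) : tensor F N k :=
  [ffun y : {ffun 'I_k -> 'I_N} => B [ffun p => if @split 1 k p is inr i then y i else j]].

Lemma tensor_expand k (B : tensor F N k.+1) :
  B = \sum_j tprod (erefl : (1 + k)%N = k.+1) (unit_tensor j) (slice j B).
Proof.
apply/ffunP => x; set x0 := x (cast_ord (erefl : (1 + k)%N = k.+1) (lshift k ord0)).
rewrite sum_ffunE (bigD1 x0) //= big1 ?addr0; last first.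
  by move=> j j_ne; rewrite !ffunE /= eq_sym (negbTE j_ne) mul0r.
rewrite !ffunE /= eqxx mul1r; congr (B _); apply/ffunP => p; rewrite !ffunE.
case: splitP => [j /= p_eq|i /= p_eq]; last by rewrite ffunE; congr (x _); apply/val_inj.
by congr (x _); apply/val_inj; rewrite /= p_eq (ord1 j).
Qed.

End Expansion.

Scheme sm_size_mut := Induction for sm_size Sort Prop
  with sm_fam_mut := Induction for sm_fam Sort Prop.

Lemma sm_fam_sum (F : fieldType) N e f k (efk : (e + f)%N = k) (I : Type) (s : seq I)
    (G : I -> tensor F N e) (H : I -> tensor F N f) :
  (0 < e)%N -> (0 < f)%N ->
  (forall i, exists sG, sm_size (G i) sG) -> (forall i, exists sH, sm_size (H i) sH) ->
  exists t, sm_fam (\sum_(i <- s) tprod efk (G i) (H i)) t.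
Proof.
move=> e_gt0 f_gt0 G_sized H_sized; elim: s => [|i s [t s_fam]].
  by exists 0%N; rewrite big_nil; apply: fam_nil.
have [[sG G_sm] [sH H_sm]] := (G_sized i, H_sized i).
by exists (sG + sH + t)%N; rewrite big_cons addrC; apply: fam_cons.
Qed.

Lemma sm_size_exists (F : fieldType) N k (B : tensor F N k) : (0 < k)%N ->
  exists s, sm_size B s.
Proof.
elim: k B => // -[|k] IH B _; first by exists (B != 0); apply: sm_one.
have [t B_fam] : exists t, sm_fam (\sum_j tprod erefl (unit_tensor F j) (slice j B)) t.
  rewrite -big_enum; apply: sm_fam_sum => // j; last exact: IH.
  by exists (unit_tensor F j != 0); apply: sm_one.
by exists t; rewrite [B]tensor_expand; apply: sm_many.
Qed.

Lemma natmin_mem (S : nat -> Prop) : (exists m, S m) -> S (natmin S).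
Proof.
move=> [m Sm]; have ex_m : exists m, `[< S m >] by exists m; apply/asboolP.
case: (ex_minnP ex_m) => m0 /asboolP Sm0 m0_min.
have min_ex : exists m, [set m | S m /\ forall m', S m' -> (m <= m')%N]%classic m.
  by exists m0; split => // m' Sm'; apply: m0_min; apply/asboolP.
by have [] := xgetPex 0%N min_ex.
Qed.

Lemma sm_size_Lncsm (F : fieldType) N k (B : tensor F N k) : (0 < k)%N ->
  sm_size B (Lncsm B).
Proof. by move=> k_gt0; apply: natmin_mem; apply: sm_size_exists. Qed.

Definition pow_log2 (x : R) (k : nat) : R := powR x (ln k%:R / ln 2).

Lemma pow_log2_gt0 x k : 0 < x -> 0 < pow_log2 x k.
Proof. exact: powR_gt0. Qed.

Lemma pow_log2_1 x : pow_log2 x 1 = 1.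
Proof. by rewrite /pow_log2 ln1 mul0r powRr0. Qed.

Lemma pow_log2_le_mul x e k : 1 <= x -> (0 < k <= 2 * e)%N ->
  pow_log2 x k <= x * pow_log2 x e.
Proof.
move=> x_ge1 /andP[k_gt0 k_le]; have e_gt0 : (0 < e)%N by lia.
have ln2_gt0 : (0 : R) < ln 2 by rewrite ln_gt0 // ltr1n.
rewrite /pow_log2 -{2}(powRr1 (le_trans ler01 x_ge1)) -powRD; last first.
  by rewrite (gt_eqF (lt_le_trans ltr01 x_ge1)) implybT.
apply: ler_powR => //; rewrite ler_pdivrMr // mulrDl mul1r divfK ?gt_eqF //.
rewrite -lnM ?posrE ?ltr0n // ler_ln ?posrE ?mulr_gt0 ?ltr0n //.
by rewrite -natrM ler_nat.
Qed.

Lemma ler_mulV_div (x y p q m : R) : 0 <= x <= y -> 0 < q -> q <= m * p ->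
  x / p * m^-1 <= y / q.
Proof.
move=> /andP[x_ge0 x_le] q_gt0 q_le; rewrite -mulrA -invfM [p * m]mulrC.
apply: (@le_trans _ _ (x / q)); last by apply: ler_wpM2r => //; rewrite invr_ge0 ltW.
by apply: ler_wpM2l => //; rewrite lef_pV2 ?posrE // (lt_le_trans q_gt0).
Qed.

Section FormulaSizeBound.
Variables (F : fieldType) (n' : nat).
Local Notation n := n'.+1.

Lemma decomp_le_sm_size k (B : tensor F (n * n) k) s : sm_size B s ->
  forall a b, decomp_le a b (unflat B) (s%:R / pow_log2 n%:R k).
Proof.
move=> B_s; have n_ge1 : (1 : R) <= n%:R by rewrite ler1n.
pose bound k (B : tensor F (n * n) k) (s : nat) :=
  forall a b, decomp_le a b (unflat B) (s%:R / pow_log2 n%:R k).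
apply: (sm_size_mut (P := fun k B s _ => bound k B s) (P0 := fun k B s _ => bound k B s)) B_s.
- move=> B0 a b; rewrite pow_log2_1 divr1.
  by case: eqP => [->|_]; [rewrite unflat0; apply: decomp_le0 | apply: decomp_le1].
- by [].
- by move=> k0 a b; rewrite mul0r unflat0; apply: decomp_le0.
move=> k0 e f efk B0 C sB sC T s0 e_gt0 f_gt0 _ IHB _ IHC _ IHT a b.
have efk2 : (2 * e + 2 * f)%N = (2 * k0)%N by rewrite -efk mulnDr.
have pow_log2_n_gt0 m : 0 < pow_log2 n%:R m by rewrite pow_log2_gt0 ?ltr0n.
rewrite natrD mulrDl [T + _]addrC unflatD (unflat_tprod efk efk2).
apply: decomp_leD; last exact: IHT.
have [f_le|e_lt] := leqP f e.
  have C_cost : decomp_le (~~ b) b (unflat C) n%:R^-1 by apply: decomp_le_invn; case: b.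
  apply: decomp_le_trans (decomp_le_tprod efk e_gt0 f_gt0 efk2 (IHB a (~~ b)) C_cost).
  by rewrite ler_mulV_div ?ler0n ?ler_nat ?leq_addr ?pow_log2_le_mul //; lia.
have B_cost : decomp_le a (~~ a) (unflat B0) n%:R^-1 by apply: decomp_le_invn; case: a.
apply: decomp_le_trans (decomp_le_tprod efk e_gt0 f_gt0 efk2 B_cost (IHC (~~ a) b)).
by rewrite mulrC ler_mulV_div ?ler0n ?ler_nat ?leq_addl ?pow_log2_le_mul //; lia.
Qed.

End FormulaSizeBound.

Theorem theorem4p11 (F : fieldType) (n d : nat) (A : tensor F n (2 * d)) :
  (1 <= n)%N -> (1 <= d)%N ->
  powR (n%:R : Rdefinitions.R) (ln (d%:R : Rdefinitions.R) / ln 2) * rho A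
    <= (Lncsm (flat A))%:R.
Proof.
case: n A => [//|n'] A _ d_gt0.
have rho_ab_le_size a b : rho_ab a b A <= (Lncsm (flat A))%:R / pow_log2 n'.+1%:R d.
  apply: rho_ab_le.
  by have := decomp_le_sm_size (sm_size_Lncsm (flat A) d_gt0) a b; rewrite unflat_flat.
rewrite mulrC -ler_pdivlMr ?pow_log2_gt0 ?ltr0n //.
by rewrite /rho !ge_max !rho_ab_le_size.
Qed.
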